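(* Let $k\ge 0$. If $V$ is a point configuration with $\mathrm{Th}(V)\le k$ and $H$ is a supporting hyperplane of $V$, then $\mathrm{Th}(V\cap H)\le k$. Likewise, if $\mathrm{Lev}(V)\le k$ then $\mathrm{Lev}(V\cap H)\le k$.
   Context: A point configuration is a finite set $V\subset\mathbb{R}^n$. A linear function means an affine function $\ell(x)=\delta-\langle c,x\rangle$. A supporting hyperplane of $V$ is a hyperplane $H=\{x:g(x)=0\}$ with $g$ a linear function nonnegative on $V$. A linear function $\ell$ nonnegative on $V$ is $k$-sos with respect to $V$ if there are polynomials $h_1,\dots,h_s$ with $\deg h_i\le k$ and $\ell(v)=\sum_i h_i(v)^2$ for all $v\in V$. The Theta rank $\mathrm{Th}(V)$ is the smallest $k\ge0$ such that every linear function nonnegative on $V$ is $k$-sos with respect to $V$. For $\ell$ nonnegative on $V$, $\{v\in V:\ell(v)=0\}$ is a face of $V$; inclusion-maximal faces different from $V$ are facets and the corresponding $\ell$ facet-defining. $V$ is $k$-level if every facet-defining linear function takes at most $k$ distinct values on $V$; the levelness $\mathrm{Lev}(V)$ is the smallest such $k$. *)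

From HB Require Import structures.
From mathcomp Require Import all_boot all_order all_algebra.
From mathcomp Require Import finmap.
From mathcomp Require Import reals.
From mathcomp Require Import mpoly.

Set Implicit Arguments.
Unset Strict Implicit.
Unset Printing Implicit Defensive.

Import Order.TTheory GRing.Theory Num.Theory.
Local Open Scope ring_scope.
Local Open Scope fset_scope.

Section PointConfigurations.
Variables (R : realType) (n : nat).

Definition lin_eval (c : 'rV[R]_n) (d : R) (x : 'rV[R]_n) : R :=
  d - \sum_(i < n) c 0 i * x 0 i.

Definition lin_nonneg (V : {fset 'rV[R]_n}) (c : 'rV[R]_n) (d : R) : Prop :=
  forall v, v \in V -> 0 <= lin_eval c d v.

Definition peval (h : {mpoly R[n]}) (x : 'rV[R]_n) : R := h.@[fun i => x 0 i].

(* l is k-sos w.r.t. V: l(v) = sum_i h_i(v)^2 on V with deg h_i <= k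
   (msize h = 1 + deg h, and msize 0 = 0). *)
Definition k_sos (k : nat) (V : {fset 'rV[R]_n}) (c : 'rV[R]_n) (d : R) : Prop :=
  exists hs : seq {mpoly R[n]},
    (forall h, h \in hs -> (msize h <= k.+1)%N) /\
    (forall v, v \in V -> lin_eval c d v = \sum_(h <- hs) (peval h v) ^+ 2).

Definition theta_prop (V : {fset 'rV[R]_n}) (k : nat) : Prop :=
  forall c d, lin_nonneg V c d -> k_sos k V c d.

Definition is_theta_rank (V : {fset 'rV[R]_n}) (t : nat) : Prop :=
  theta_prop V t /\ forall j, theta_prop V j -> (t <= j)%N.

Definition zero_set (V : {fset 'rV[R]_n}) (c : 'rV[R]_n) (d : R) : {fset 'rV[R]_n} :=
  [fset v in V | lin_eval c d v == 0].

Definition is_face (V F : {fset 'rV[R]_n}) : Prop :=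
  exists c d, lin_nonneg V c d /\ F = zero_set V c d.

Definition is_facet (V F : {fset 'rV[R]_n}) : Prop :=
  is_face V F /\ F != V /\
  forall G, is_face V G -> G != V -> F `<=` G -> G = F.

Definition facet_defining (V : {fset 'rV[R]_n}) (c : 'rV[R]_n) (d : R) : Prop :=
  lin_nonneg V c d /\ is_facet V (zero_set V c d).

Definition k_level (V : {fset 'rV[R]_n}) (k : nat) : Prop :=
  forall c d, facet_defining V c d ->
    (#|` [fset lin_eval c d v | v in V] | <= k)%N.

Definition is_levelness (V : {fset 'rV[R]_n}) (t : nat) : Prop :=
  k_level V t /\ forall j, k_level V j -> (t <= j)%N.

Definition supporting_hyperplane (V : {fset 'rV[R]_n}) (c : 'rV[R]_n) (d : R) : Prop :=
  c != 0 /\ lin_nonneg V c d.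

Definition cap_hyperplane (V : {fset 'rV[R]_n}) (c : 'rV[R]_n) (d : R) : {fset 'rV[R]_n} :=
  [fset v in V | lin_eval c d v == 0].

End PointConfigurations.

(* The points of V on a supporting hyperplane {g = 0} form a face W of V.
   A linear function l that is nonnegative on W can be tilted to l + lam g,
   which is nonnegative on all of the finite set V and agrees with l on W, so
   sum-of-squares certificates on V restrict to W.  If moreover l defines a
   facet F of W, its tilt defines a face of V with trace F on W; rotating that
   function about its zero set enlarges the face until it is a facet F' of V,
   still with trace F.  A facet-defining function of W is determined on W by
   its facet up to a nonzero factor, so l takes at most as many values on W as
   the defining function of F' takes on V. *)

From HB Require Import structures.
From mathcomp Require Import all_boot all_order all_algebra.
From mathcomp Require Import finmap.
From mathcomp Require Import reals.
From mathcomp Require Import mpoly.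
From mathcomp Require Import boolp.
From mathcomp Require Import ring zify.

Set Implicit Arguments.
Unset Strict Implicit.
Unset Printing Implicit Defensive.

Import Order.TTheory GRing.Theory Num.Theory.
Local Open Scope fset_scope.
Local Open Scope ring_scope.

Lemma exists_least (P : nat -> Prop) t :
  P t -> exists t', (P t' /\ forall j, P j -> (t' <= j)%N) /\ (t' <= t)%N.
Proof.
move=> Pt; have exP : exists j, `[< P j >] by exists t; apply/asboolP.
case: (ex_minnP exP) => m /asboolP Pm m_min.
by exists m; split; [split=> // j /asboolP/m_min | apply/m_min/asboolP].
Qed.

Section NonnegCombinations.
Variables (R : realFieldType) (T : choiceType) (V : {fset T}) (f g : T -> R).

Lemma exists_nonneg_shift :
  (forall v, v \in V -> 0 <= g v) ->
  (forall v, v \in V -> g v = 0 -> 0 <= f v) ->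
  exists lam, forall v, v \in V -> 0 <= f v + lam * g v.
Proof.
move=> g_ge0 f_ge0; exists (\big[Order.max/0]_(v <- V) (- f v / g v)) => v vV.
have [gv0|gv_neq0] := eqVneq (g v) 0; first by rewrite gv0 mulr0 addr0 f_ge0.
have gv_gt0 : 0 < g v by rewrite lt0r gv_neq0 g_ge0.
rewrite -lerBlDl sub0r -ler_pdivrMr //.
exact: (@le_bigmax_seq _ _ _ _ 0 v xpredT _ vV).
Qed.

Lemma exists_min_ratio v1 :
  (forall v, v \in V -> 0 <= f v) -> (forall v, v \in V -> 0 <= g v) ->
  v1 \in V -> g v1 != 0 ->
  exists s, exists2 v0, v0 \in V &
    [/\ g v0 != 0, f v0 = s * g v0 & forall v, v \in V -> s * g v <= f v].
Proof.
move=> f_ge0 g_ge0 v1V gv1.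
pose P (x : V) := g (val x) != 0.
have [x Px x_min] := @arg_minP _ _ _ [` v1V] P (fun x => f (val x) / g (val x)) gv1.
exists (f (val x) / g (val x)), (val x); first exact: fsvalP.
split=> // [|v vV]; first by rewrite divfK.
have [->|gv_neq0] := eqVneq (g v) 0; first by rewrite mulr0 f_ge0.
have gv_gt0 : 0 < g v by rewrite lt0r gv_neq0 g_ge0.
by rewrite -ler_pdivlMr //; apply: (x_min [` vV]).
Qed.

Lemma card_values_scale (W : {fset T}) s :
  W `<=` V -> s != 0 -> (forall w, w \in W -> f w = s * g w) ->
  (#|` [fset g w | w in W]| <= #|` [fset f v | v in V]|)%N.
Proof.
move=> WV s_neq0 fg.
set G := [fset g w | w in W].
have -> : #|` G| = #|` [fset s * x | x in G]|.
  by rewrite [RHS]card_imfset //; apply: mulfI.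
apply: fsubset_leq_card; apply/fsubsetP => _ /imfsetP[_ /imfsetP[w /= wW ->] ->].
by rewrite -fg //; apply/imfsetP; exists w => //; apply: (fsubsetP WV).
Qed.

End NonnegCombinations.

Section Faces.
Variables (R : realType) (n : nat).
Implicit Types (V W : {fset 'rV[R]_n}) (c : 'rV[R]_n) (d : R).

Lemma lin_evalDZ c1 d1 c2 d2 a v :
  lin_eval (c1 + a *: c2) (d1 + a * d2) v = lin_eval c1 d1 v + a * lin_eval c2 d2 v.
Proof.
rewrite /lin_eval; under eq_bigr => i _ do rewrite !mxE mulrDl -mulrA.
by rewrite big_split /= -mulr_sumr; ring.
Qed.

Lemma in_zero_set V c d v :
  (v \in zero_set V c d) = (v \in V) && (lin_eval c d v == 0).
Proof. by rewrite !inE. Qed.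

Lemma zero_set_subset V c d : zero_set V c d `<=` V.
Proof. by apply/fsubsetP => v; rewrite in_zero_set => /andP[]. Qed.

Lemma zero_set_neq V c d :
  zero_set V c d != V -> exists2 v, v \in V & lin_eval c d v != 0.
Proof.
move=> neqV; apply: contrapT => all_zero; move/eqP: neqV; apply.
apply/fsetP => v; rewrite in_zero_set andb_idr // => vV.
by apply: contrapT => nz; apply: all_zero; exists v => //; apply/negP.
Qed.

Lemma lin_eval_zero_set V c d v : v \in zero_set V c d -> lin_eval c d v = 0.
Proof. by rewrite in_zero_set => /andP[_ /eqP]. Qed.

Lemma lin_nonneg_subset W V c d : W `<=` V -> lin_nonneg V c d -> lin_nonneg W c d.
Proof. by move=> /fsubsetP WV nnV v /WV; apply: nnV. Qed.

Lemma zero_set_addZ W c1 d1 c2 d2 a :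
  (forall w, w \in W -> lin_eval c2 d2 w = 0) ->
  zero_set W (c1 + a *: c2) (d1 + a * d2) = zero_set W c1 d1.
Proof.
move=> l2_W; apply/fsetP => w; rewrite !in_zero_set.
by case: (boolP (w \in W)) => //= wW; rewrite lin_evalDZ l2_W // mulr0 addr0.
Qed.

Lemma lin_nonneg_shift V c d c' d' :
  lin_nonneg V c d -> lin_nonneg (zero_set V c d) c' d' ->
  exists lam, lin_nonneg V (c' + lam *: c) (d' + lam * d).
Proof.
move=> nnV nnW.
have [lam shift_ge0] : exists lam, forall v, v \in V ->
    0 <= lin_eval c' d' v + lam * lin_eval c d v.
  apply: exists_nonneg_shift => [v /nnV //| v vV l0].
  by apply: nnW; rewrite in_zero_set vV l0 eqxx.
by exists lam => v vV; rewrite lin_evalDZ shift_ge0.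
Qed.

Lemma theta_prop_zero_set V c d k :
  lin_nonneg V c d -> theta_prop V k -> theta_prop (zero_set V c d) k.
Proof.
move=> nnV thV c' d' nnW.
have [lam nn_shift] := lin_nonneg_shift nnV nnW.
have [hs [hs_deg hs_sum]] := thV _ _ nn_shift.
exists hs; split=> // v vW.
rewrite -hs_sum; last exact: (fsubsetP (zero_set_subset V c d)).
by rewrite lin_evalDZ (lin_eval_zero_set vW) mulr0 addr0.
Qed.

Lemma facet_face_sup W F G :
  is_facet W F -> is_face W G -> F `<=` G -> G = F \/ G = W.
Proof.
move=> [_ [_ F_max]] faceG FG.
by have [->|GW] := eqVneq G W; [right | left; apply: F_max].
Qed.

Lemma facet_defining_unique W c' d' c2 d2 :
  facet_defining W c' d' -> lin_nonneg W c2 d2 ->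
  zero_set W c2 d2 = zero_set W c' d' ->
  exists2 s, s != 0 & forall w, w \in W -> lin_eval c2 d2 w = s * lin_eval c' d' w.
Proof.
move=> [nn' facetF] nn2 same_zeros.
have [w1 w1W l'w1] := zero_set_neq facetF.2.1.
have [s [w0 w0W [l'w0 l2w0 s_le]]] := exists_min_ratio nn2 nn' w1W l'w1.
set G := zero_set W (c2 + (- s) *: c') (d2 + (- s) * d').
have faceG : is_face W G.
  exists (c2 + (- s) *: c'), (d2 + (- s) * d'); split => // w wW.
  by rewrite lin_evalDZ mulNr subr_ge0 s_le.
have FG : zero_set W c' d' `<=` G.
  apply/fsubsetP => w wF; rewrite in_zero_set lin_evalDZ (lin_eval_zero_set wF).
  rewrite (lin_eval_zero_set (_ : w \in zero_set W c2 d2)) ?same_zeros //.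
  by rewrite mulr0 addr0 eqxx andbT (fsubsetP (zero_set_subset _ _ _) _ wF).
have [GF|GW] := facet_face_sup facetF faceG FG.
  have : w0 \in G by rewrite in_zero_set w0W lin_evalDZ l2w0 mulNr subrr eqxx.
  by rewrite GF in_zero_set (negbTE l'w0) andbF.
have l2_prop w : w \in W -> lin_eval c2 d2 w = s * lin_eval c' d' w.
  move=> wW; apply/eqP; rewrite -subr_eq0 -mulNr -lin_evalDZ.
  by apply/eqP; apply: (@lin_eval_zero_set W); rewrite -/G GW.
exists s => //; apply/eqP => s0.
have : w1 \in zero_set W c2 d2 by rewrite in_zero_set w1W l2_prop // s0 mul0r eqxx.
by rewrite same_zeros in_zero_set (negbTE l'w1) andbF.
Qed.

Lemma rotate_face V W cm dm c2 d2 :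
  lin_nonneg V cm dm -> lin_nonneg V c2 d2 ->
  zero_set V cm dm `<=` zero_set V c2 d2 -> zero_set V c2 d2 != V ->
  (forall w, w \in W -> lin_eval c2 d2 w = 0) ->
  exists c3 d3, [/\ lin_nonneg V c3 d3, zero_set V cm dm `<` zero_set V c3 d3 &
    zero_set W c3 d3 = zero_set W cm dm].
Proof.
move=> nnm nn2 GG2 G2V l2_W.
have [v1 v1V l2v1] := zero_set_neq G2V.
have [s [v0 v0V [l2v0 lmv0 s_le]]] := exists_min_ratio nnm nn2 v1V l2v1.
set c3 := cm + (- s) *: c2; set d3 := dm + (- s) * d2.
have zero3 v : lin_eval c3 d3 v = lin_eval cm dm v - s * lin_eval c2 d2 v.
  by rewrite lin_evalDZ mulNr.
have G_sub : zero_set V cm dm `<=` zero_set V c3 d3.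
  apply/fsubsetP => v vG; have vV := fsubsetP (zero_set_subset _ _ _) _ vG.
  rewrite in_zero_set vV zero3 (lin_eval_zero_set vG).
  by rewrite (lin_eval_zero_set (fsubsetP GG2 v vG)) mulr0 subrr eqxx.
have v0_notG : v0 \notin zero_set V cm dm.
  by apply: contra l2v0 => /(fsubsetP GG2)/lin_eval_zero_set ->.
exists c3, d3; split; last exact: zero_set_addZ.
- by move=> v vV; rewrite zero3 subr_ge0 s_le.
- rewrite fproperEneq G_sub andbT; apply/eqP => G_eq; move: v0_notG.
  by rewrite G_eq in_zero_set v0V zero3 lmv0 subrr eqxx.
Qed.

End Faces.

Section FacetExtension.
Variables (R : realType) (n : nat) (V W : {fset 'rV[R]_n}) (c' : 'rV[R]_n) (d' : R).
Hypotheses (WV : W `<=` V) (fdW : facet_defining W c' d').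

Lemma larger_face_with_trace cm dm :
  lin_nonneg V cm dm -> zero_set W cm dm = zero_set W c' d' ->
  ~ is_facet V (zero_set V cm dm) ->
  exists c2 d2, [/\ lin_nonneg V c2 d2, zero_set V cm dm `<` zero_set V c2 d2 &
    zero_set W c2 d2 = zero_set W c' d'].
Proof.
move=> nnm trace not_facet.
have GV : zero_set V cm dm != V.
  apply/eqP => GV; move/eqP: fdW.2.2.1; apply; rewrite -trace.
  apply/fsetP => w; rewrite in_zero_set; apply: andb_idr => wW.
  apply/eqP; apply: (@lin_eval_zero_set _ _ V); rewrite GV; exact: (fsubsetP WV).
have [G2 [[c2 [d2 [nn2 ->]]] G2V GG2 G2G]] : exists G2,
    [/\ is_face V G2, G2 != V, zero_set V cm dm `<=` G2 & G2 <> zero_set V cm dm].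
  apply: contrapT => no_G2; apply: not_facet; split; first by exists cm, dm.
  split=> // G2 faceG2 G2V GG2; apply: contrapT => G2G.
  by apply: no_G2; exists G2.
(* The larger face either keeps the trace on W, or by maximality of the facet
   it contains W, and then rotating about it preserves the trace. *)
have [trace2|trace2] := eqVneq (zero_set W c2 d2) (zero_set W c' d').
  by exists c2, d2; split=> //; rewrite fproperEneq GG2 andbT eq_sym; apply/eqP.
have l2_W w : w \in W -> lin_eval c2 d2 w = 0.
  have faceW2 : is_face W (zero_set W c2 d2).
    by exists c2, d2; split=> //; exact: lin_nonneg_subset WV nn2.
  have FG2 : zero_set W c' d' `<=` zero_set W c2 d2.
    apply/fsubsetP => v; rewrite -trace !in_zero_set => /andP[vW lv0].
    have := fsubsetP GG2 v; rewrite !in_zero_set (fsubsetP WV v vW) lv0 vW.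
    by move=> /(_ isT).
  have [/eqP|W2] := facet_face_sup fdW.2 faceW2 FG2; first by rewrite (negbTE trace2).
  by move=> wW; apply: (@lin_eval_zero_set _ _ W); rewrite W2.
have [c3 [d3 [nn3 lt3 trace3]]] := rotate_face nnm nn2 GG2 G2V l2_W.
by exists c3, d3; rewrite trace3.
Qed.

Lemma facet_extends_with_trace cm dm :
  lin_nonneg V cm dm -> zero_set W cm dm = zero_set W c' d' ->
  exists c2 d2, facet_defining V c2 d2 /\ zero_set W c2 d2 = zero_set W c' d'.
Proof.
have [N] := ubnP (#|`V| - #|`zero_set V cm dm|).
elim: N cm dm => // N IH cm dm ltN nnm trace.
have [facet|not_facet] := pselect (is_facet V (zero_set V cm dm)).
  by exists cm, dm.
have [c2 [d2 [nn2 lt2 trace2]]] := larger_face_with_trace nnm trace not_facet.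
apply: (IH c2 d2) => //.
have := fproper_ltn_card lt2; have := fsubset_leq_card (zero_set_subset V c2 d2).
lia.
Qed.

End FacetExtension.

Lemma k_level_zero_set (R : realType) n (V : {fset 'rV[R]_n}) c d k :
  lin_nonneg V c d -> k_level V k -> k_level (zero_set V c d) k.
Proof.
move=> nnV lvV c' d' fdW.
have WV := zero_set_subset V c d.
have [lam nn_shift] := lin_nonneg_shift nnV fdW.1.
have trace : zero_set (zero_set V c d) (c' + lam *: c) (d' + lam * d) =
    zero_set (zero_set V c d) c' d'.
  by apply: zero_set_addZ => w; apply: lin_eval_zero_set.
have [c2 [d2 [fdV trace2]]] := facet_extends_with_trace WV fdW nn_shift trace.
have [s s_neq0 l2_eq] := facet_defining_unique fdW (lin_nonneg_subset WV fdV.1) trace2.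
exact: leq_trans (card_values_scale WV s_neq0 l2_eq) (lvV _ _ fdV).
Qed.

Theorem lemma2p3 (R : realType) (n k : nat) (V : {fset 'rV[R]_n})
  (c : 'rV[R]_n) (d : R) :
  supporting_hyperplane V c d ->
  ((exists t, is_theta_rank V t /\ (t <= k)%N) ->
    exists t', is_theta_rank (cap_hyperplane V c d) t' /\ (t' <= k)%N) /\
  ((exists t, is_levelness V t /\ (t <= k)%N) ->
    exists t', is_levelness (cap_hyperplane V c d) t' /\ (t' <= k)%N).
Proof.
move=> [_ nnV]; split=> [[t [[thV _] tk]] | [t [[lvV _] tk]]].
  have [t' [rank t't]] := exists_least (theta_prop_zero_set nnV thV).
  by exists t'; split; last exact: leq_trans t't tk.
have [t' [lev t't]] := exists_least (k_level_zero_set nnV lvV).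
by exists t'; split; last exact: leq_trans t't tk.
Qed.
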